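(* Assume that $\Phi \in C^1(B_{r_0},\mathbf{R})$ satisfies the hypotheses described in the context (so that the abstract critical-point result recalled there applies) and furthermore that for all $n \geq 2$ and all $v \in V$ for which $G(\mathcal{L}_n v) > 0$, \[ G(\mathcal{L}_n v) < n^{q+1} G(v). \] Then there is a constant $C_9 \leq C_0$ depending only on $G$ such that, provided $\alpha/m \leq C_9$ and $(\mu/m)^{1/(q-1)} \leq C_0 r_0$, the critical point $v$ of $\Phi$ given by the abstract result recalled in the context has minimal period (with respect to $t$) equal to $2\pi$.
   Context: Let $\Omega := \mathbf{R}/2\pi\mathbf{Z} \times (0,\pi)$ and let $V$ be the Hilbert space of functions $v(t,x) = \eta(t+x) - \eta(t-x)$ with $\eta \in H^1(\mathbf{R}/2\pi\mathbf{Z})$ odd (equivalently $v = \sum_{j\ge1}\xi_j \cos(jt)\sin(jx)$ with $\sum j^2\xi_j^2<\infty$), endowed with the $H^1$ norm $\|v\|^2 = \int_\Omega v_t^2 + v_x^2$. For $n \in \mathbf{N}$ and $v(t,x)=\eta(t+x)-\eta(t-x)\in V$ set $(\mathcal{L}_n v)(t,x) := \eta(n(t+x)) - \eta(n(t-x))$. Let $B_{r_0} = \{v \in V : \|v\| < r_0\}$, $S$ the unit sphere of $V$, and consider $\Phi(v) = \frac{\mu}{2}\|v\|^2 - G(v) + R(v)$ on $B_{r_0}$, where $\mu > 0$ and: (H1) $G \in C^1(V,\mathbf{R})$ is positively homogeneous of degree $q+1$ with $q>1$ and $DG: V \to V^*$ is compact; (H2) $R \in C^1(B_{r_0},\mathbf{R})$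 and $DR: B_{r_0} \to V^*$ is compact; (H3) $R(0)=0$ and there is $\alpha>0$ with $|DR(v)[v]| \leq \alpha \|v\|^{q+1}$ for all $v \in B_{r_0}$. Assume $m := \sup_{v \neq 0} G(v)/\|v\|^{q+1} > 0$, and let $K_0 := \{v \in S : G(v) = m\}$ (nonempty and compact). The abstract result used is: there is a small constant $C_0>0$ depending only on $q$ such that if $\alpha/m \leq C_0$ and $(\mu/m)^{1/(q-1)} \leq C_0 r_0$, then $\Phi$ has a critical point $v \in B_{r_0}$ at level $c = \frac{q-1}{2} m \big(\frac{\mu}{(q+1)m}\big)^{\frac{q+1}{q-1}}[1 + O(\alpha/m)]$, and moreover $v = \big(\frac{\mu}{m(q+1)}\big)^{1/(q-1)} y$ with $\mathrm{dist}(y, K_0) \leq h(\alpha/m)$ for some function $h$ depending only on $G$ with $\lim_{s\to0}h(s)=0$. *)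

From Stdlib Require Import Reals.
From Coquelicot Require Import Coquelicot.
Open Scope R_scope.

(** The space V is represented through the Fourier coefficients of
    v(t,x) = sum_{j>=1} xi_j cos(j t) sin(j x)  (equivalent description given
    in the context).  A coefficient sequence is a map nat -> R; index 0 is
    unused and required to be 0. *)
Definition seqV := nat -> R.

Definition inV (v : seqV) : Prop :=
  v 0%nat = 0 /\ ex_series (fun j => (INR j * v j) ^ 2).

(** ||v||^2 = int_Omega v_t^2 + v_x^2 = pi^2 * sum_j j^2 xi_j^2 *)
Definition Vnorm (v : seqV) : R :=
  sqrt (PI ^ 2 * Series (fun j => (INR j * v j) ^ 2)).

(** the associated inner product  int_Omega u_t w_t + u_x w_x *)
Definition Vinner (u w : seqV) : R :=
  PI ^ 2 * Series (fun j => INR j ^ 2 * u j * w j).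

Definition vadd (u w : seqV) : seqV := fun j => u j + w j.
Definition vsub (u w : seqV) : seqV := fun j => u j - w j.
Definition vscal (a : R) (u : seqV) : seqV := fun j => a * u j.
Definition vzero : seqV := fun _ => 0.

Definition vfun (v : seqV) (t x : R) : R :=
  Series (fun j => v j * cos (INR j * t) * sin (INR j * x)).

(** real power x^y, with the convention 0^y = 0 (used for y > 0) *)
Definition powr (x y : R) : R := if Rle_dec x 0 then 0 else Rpower x y.

(** L_n : eta(s) |-> eta(n s).  If eta(s) = sum a_j sin(j s) then
    (L_n v) has coefficient xi_j at index n*j and 0 at indices not
    divisible by n. *)
Definition Lop (n : nat) (v : seqV) : seqV :=
  fun k => if Nat.eqb (Nat.modulo k n) 0 then v (Nat.div k n) else 0.

Definition Vball (r0 : R) (v : seqV) : Prop := inV v /\ Vnorm v < r0.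

Definition is_dual (l : seqV -> R) : Prop :=
  (forall u w a b, inV u -> inV w ->
      l (vadd (vscal a u) (vscal b w)) = a * l u + b * l w) /\
  exists C, forall u, inV u -> Rabs (l u) <= C * Vnorm u.

Definition dual_close (l1 l2 : seqV -> R) (eps : R) : Prop :=
  forall u, inV u -> Rabs (l1 u - l2 u) <= eps * Vnorm u.

Definition is_frechet_on (U : seqV -> Prop) (F : seqV -> R)
    (DF : seqV -> seqV -> R) : Prop :=
  forall v, U v -> is_dual (DF v) /\
    forall eps, 0 < eps -> exists delta, 0 < delta /\
      forall h, inV h -> Vnorm h < delta -> U (vadd v h) ->
        Rabs (F (vadd v h) - F v - DF v h) <= eps * Vnorm h.

Definition dual_continuous_on (U : seqV -> Prop) (DF : seqV -> seqV -> R) : Prop :=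
  forall v, U v -> forall eps, 0 < eps -> exists delta, 0 < delta /\
    forall w, U w -> Vnorm (vsub w v) < delta -> dual_close (DF w) (DF v) eps.

Definition C1_on (U : seqV -> Prop) (F : seqV -> R) (DF : seqV -> seqV -> R) : Prop :=
  is_frechet_on U F DF /\ dual_continuous_on U DF.

(** DF : U -> V_dual is compact: images of bounded sets are relatively compact
    in V_dual (sequential form: every bounded sequence has a subsequence whose
    images converge in V_dual) *)
Definition compact_dual_map (U : seqV -> Prop) (DF : seqV -> seqV -> R) : Prop :=
  forall (vs : nat -> seqV) (M : R),
    (forall k, U (vs k)) -> (forall k, Vnorm (vs k) <= M) ->
    exists (phi : nat -> nat) (l : seqV -> R),
      (forall k, (phi k < phi (S k))%nat) /\ is_dual l /\
      forall eps, 0 < eps -> exists N : nat, forall k, (N <= k)%nat ->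
        dual_close (DF (vs (phi k))) l eps.

Definition is_m (G : seqV -> R) (q m : R) : Prop :=
  is_lub (fun r => exists v, inV v /\ v <> vzero /\
                      r = G v / powr (Vnorm v) (q + 1)) m.

Definition K0 (G : seqV -> R) (m : R) (v : seqV) : Prop :=
  inV v /\ Vnorm v = 1 /\ G v = m.

Definition dist_le (y : seqV) (S : seqV -> Prop) (d : R) : Prop :=
  forall eps, 0 < eps -> exists w, S w /\ Vnorm (vsub y w) < d + eps.

Definition minimal_period_2pi (v : seqV) : Prop :=
  (forall t x, 0 < x < PI -> vfun v (t + 2 * PI) x = vfun v t x) /\
  forall T, 0 < T ->
    (forall t x, 0 < x < PI -> vfun v (t + T) x = vfun v t x) -> 2 * PI <= T.

From Stdlib Require Import Reals Lra Lia Psatz Classical ClassicalEpsilon FunctionalExtensionality Wf_nat.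
From Coquelicot Require Import Coquelicot.
Open Scope R_scope.

(* The critical point is a positive multiple of a vector [y] within [h (alpha/m)] of the
   compact set [K0] of normalized maximizers of [G], so it suffices that some neighbourhood
   of [K0] contains no vector with a period [T < 2 pi]. By uniqueness of sine coefficients, a
   period [T] forces [cos (j T) = 1] on every nonzero mode [j]; hence all modes are multiples
   of the least such [n], and [n >= 2] since [T < 2 pi], i.e. the vector is [L_n w]. A maximizer
   [z = L_n w] would give [m = G z < n^(q+1) G w <= m (n ||w||)^(q+1) <= m]; so every [z] in
   [K0] keeps energy off the multiples of [n], uniformly in [n >= 2], and the compactness of
   [K0] (from the Lagrange identity [DG z = (q+1) m <z, .>] and the compactness of [DG])
   turns this into a uniform positive distance. *)

(** * Series of nonnegative terms *)

Section NonnegSeries.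

Variable a : nat -> R.
Hypothesis a_ge0 : forall n, 0 <= a n.

Lemma sum_n_le_mono m n : (m <= n)%nat -> sum_n a m <= sum_n a n.
Proof.
  induction 1 as [|n _ IH]; [lra|].
  rewrite sum_Sn. unfold plus; simpl. specialize (a_ge0 (S n)). lra.
Qed.

Lemma sum_n_add_term_le m n : (m < n)%nat -> sum_n a m + a n <= sum_n a n.
Proof.
  intros Hmn. destruct n as [|n]; [lia|].
  rewrite sum_Sn. unfold plus; simpl.
  pose proof (sum_n_le_mono m n ltac:(lia)). lra.
Qed.

Lemma term_le_sum_n j : a j <= sum_n a j.
Proof.
  destruct j as [|j]; [rewrite sum_O; lra|].
  pose proof (sum_n_add_term_le 0 (S j) ltac:(lia)) as Hle.
  rewrite sum_O in Hle. specialize (a_ge0 0%nat). lra.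
Qed.

Lemma sum_n_le_Series M : ex_series a -> sum_n a M <= Series a.
Proof.
  intros Ha. apply (is_lim_seq_incr_compare (sum_n a)).
  - exact (Series_correct a Ha).
  - intros n. apply sum_n_le_mono. lia.
Qed.

Lemma term_le_Series j : ex_series a -> a j <= Series a.
Proof. intros Ha. eapply Rle_trans; [apply term_le_sum_n | apply sum_n_le_Series, Ha]. Qed.

Lemma Series_ge0 : ex_series a -> 0 <= Series a.
Proof. intros Ha. pose proof (term_le_Series 0 Ha). specialize (a_ge0 0%nat). lra. Qed.

Lemma ex_series_bounded_sums B :
  (forall M, sum_n a M <= B) -> ex_series a /\ Series a <= B.
Proof.
  intros HB.
  assert (Hinc : forall n, sum_n a n <= sum_n a (S n)) by (intros n; apply sum_n_le_mono; lia).
  destruct (ex_finite_lim_seq_incr (sum_n a) B Hinc HB) as [l Hl].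
  assert (Hs : is_series a l) by exact Hl.
  split; [exists l; exact Hs|].
  rewrite (is_series_unique a l Hs).
  assert (Hle : Rbar_le l B).
  { apply (is_lim_seq_le (sum_n a) (fun _ => B)); auto. apply is_lim_seq_const. }
  exact Hle.
Qed.

End NonnegSeries.

Lemma Series_subseq_le (a : nat -> R) (phi : nat -> nat) :
  (forall n, 0 <= a n) ->
  (forall k, (phi k < phi (S k))%nat) -> ex_series a ->
  ex_series (fun k => a (phi k)) /\ Series (fun k => a (phi k)) <= Series a.
Proof.
  intros a_ge0 Hphi Ha. apply ex_series_bounded_sums; [intros; apply a_ge0|].
  assert (Hsub : forall M, sum_n (fun k => a (phi k)) M <= sum_n a (phi M)).
  { induction M as [|M IH].
    - rewrite sum_O. apply term_le_sum_n, a_ge0.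
    - rewrite sum_Sn. unfold plus; simpl.
      pose proof (sum_n_add_term_le a a_ge0 (phi M) (phi (S M)) (Hphi M)). lra. }
  intros M. eapply Rle_trans; [apply Hsub | apply sum_n_le_Series; assumption].
Qed.

Lemma finite_pos_min (P : nat -> Prop) (f : nat -> R) M :
  (forall n, (n <= M)%nat -> P n -> 0 < f n) ->
  exists d, 0 < d /\ forall n, (n <= M)%nat -> P n -> d <= f n.
Proof.
  induction M as [|M IH]; intros Hpos.
  - destruct (classic (P 0%nat)) as [H0|H0].
    + exists (f 0%nat). split; [apply Hpos; auto|]. intros n Hn Pn.
      replace n with 0%nat by lia. lra.
    + exists 1. split; [lra|]. intros n Hn Pn. replace n with 0%nat in Pn by lia. contradiction.
  - destruct IH as [d [Hd Hmin]]; [intros n Hn; apply Hpos; lia|].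
    destruct (classic (P (S M))) as [HS|HS].
    + exists (Rmin d (f (S M))). split; [apply Rmin_pos; [exact Hd | apply Hpos; auto]|].
      intros n Hn Pn. destruct (Nat.eq_dec n (S M)) as [->|Hne]; [apply Rmin_r|].
      eapply Rle_trans; [apply Rmin_l | apply Hmin; [lia | exact Pn]].
    + exists d. split; [exact Hd|]. intros n Hn Pn.
      destruct (Nat.eq_dec n (S M)) as [->|Hne]; [contradiction | apply Hmin; [lia | exact Pn]].
Qed.

(** * The energy norm *)

Definition ex_energy (v : seqV) : Prop := ex_series (fun j => (INR j * v j) ^ 2).
Definition energy (v : seqV) : R := Series (fun j => (INR j * v j) ^ 2).

Definition vlin (a : R) (u : seqV) (b : R) (w : seqV) : seqV := vadd (vscal a u) (vscal b w).

Lemma energy_ge0 v : ex_energy v -> 0 <= energy v.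
Proof. apply Series_ge0. intros; apply pow2_ge_0. Qed.

Lemma ex_series_inner u w : ex_energy u -> ex_energy w ->
  ex_series (fun j => INR j ^ 2 * u j * w j).
Proof.
  intros Hu Hw.
  apply (@ex_series_le R_AbsRing R_CompleteNormedModule _ (fun j => / 2 * ((INR j * u j) ^ 2 + (INR j * w j) ^ 2))).
  - intros n. change (norm ?x) with (Rabs x). apply Rabs_le.
    pose proof (pow2_ge_0 (INR n * u n - INR n * w n)).
    pose proof (pow2_ge_0 (INR n * u n + INR n * w n)). split; nra.
  - exact (ex_series_scal_l _ _ (ex_series_plus _ _ Hu Hw)).
Qed.

Lemma ex_energy_lin a u b w : ex_energy u -> ex_energy w -> ex_energy (vlin a u b w).
Proof.
  intros Hu Hw. unfold ex_energy, vlin, vadd, vscal.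
  apply (ex_series_ext (fun j => a ^ 2 * (INR j * u j) ^ 2
      + (2 * a * b * (INR j ^ 2 * u j * w j) + b ^ 2 * (INR j * w j) ^ 2))).
  { intros n; simpl; ring. }
  exact (ex_series_plus _ _ (ex_series_scal_l _ _ Hu)
    (ex_series_plus _ _ (ex_series_scal_l _ _ (ex_series_inner u w Hu Hw)) (ex_series_scal_l _ _ Hw))).
Qed.

Lemma inV_lin a u b w : inV u -> inV w -> inV (vlin a u b w).
Proof.
  intros [Hu0 Hu] [Hw0 Hw]. split; [|apply ex_energy_lin; assumption].
  unfold vlin, vadd, vscal; simpl. rewrite Hu0, Hw0. ring.
Qed.

Lemma vsub_vlin u w : vsub u w = vlin 1 u (-1) w.
Proof. apply functional_extensionality; intros j. unfold vsub, vlin, vadd, vscal. ring. Qed.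

Lemma vscal_vlin c u : vscal c u = vlin c u 0 u.
Proof. apply functional_extensionality; intros j. unfold vlin, vadd, vscal. ring. Qed.

Lemma vadd_vscal_vlin z s u : vadd z (vscal s u) = vlin 1 z s u.
Proof. apply functional_extensionality; intros j. unfold vlin, vadd, vscal. ring. Qed.

Lemma inV_sub u w : inV u -> inV w -> inV (vsub u w).
Proof. rewrite vsub_vlin. apply inV_lin. Qed.

Lemma inV_scal c u : inV u -> inV (vscal c u).
Proof. intros Hu. rewrite vscal_vlin. apply inV_lin; assumption. Qed.

Lemma Vnorm_ge0 v : 0 <= Vnorm v.
Proof. apply sqrt_pos. Qed.

Lemma Vnorm_sq v : ex_energy v -> Vnorm v ^ 2 = PI ^ 2 * energy v.
Proof.
  intros Hv. unfold Vnorm. rewrite <- Rsqr_pow2. apply Rsqr_sqrt.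
  apply Rmult_le_pos; [apply pow2_ge_0 | apply energy_ge0, Hv].
Qed.

Lemma Vnorm_le v eps : 0 <= eps -> PI ^ 2 * energy v <= eps ^ 2 -> Vnorm v <= eps.
Proof. intros Heps H. rewrite <- (sqrt_pow2 eps Heps). apply sqrt_le_1_alt, H. Qed.

Lemma Vinner_sym u w : Vinner u w = Vinner w u.
Proof. unfold Vinner. f_equal. apply Series_ext; intros; ring. Qed.

Lemma Vinner_diag v : ex_energy v -> Vinner v v = Vnorm v ^ 2.
Proof.
  intros Hv. rewrite Vnorm_sq by exact Hv. unfold Vinner, energy.
  f_equal. apply Series_ext; intros; ring.
Qed.

Lemma Vinner_linl a u b w x : ex_energy u -> ex_energy w -> ex_energy x ->
  Vinner (vlin a u b w) x = a * Vinner u x + b * Vinner w x.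
Proof.
  intros Hu Hw Hx. unfold Vinner, vlin, vadd, vscal.
  rewrite (Series_ext _ (fun j => a * (INR j ^ 2 * u j * x j) + b * (INR j ^ 2 * w j * x j)))
    by (intros; ring).
  rewrite Series_plus, !Series_scal_l; [ring| |].
  - exact (ex_series_scal_l _ _ (ex_series_inner u x Hu Hx)).
  - exact (ex_series_scal_l _ _ (ex_series_inner w x Hw Hx)).
Qed.

Lemma Vnorm_sq_lin a u b w : ex_energy u -> ex_energy w ->
  Vnorm (vlin a u b w) ^ 2 = a ^ 2 * Vnorm u ^ 2 + 2 * a * b * Vinner u w + b ^ 2 * Vnorm w ^ 2.
Proof.
  intros Hu Hw. pose proof (ex_energy_lin a u b w Hu Hw) as Hl.
  rewrite <- !Vinner_diag by assumption.
  rewrite Vinner_linl by assumption.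
  rewrite (Vinner_sym u), (Vinner_sym w), !Vinner_linl by assumption.
  rewrite (Vinner_sym w u). ring.
Qed.

Lemma Vinner_CS u w : ex_energy u -> ex_energy w ->
  Rabs (Vinner u w) <= Vnorm u * Vnorm w.
Proof.
  intros Hu Hw.
  assert (Hquad : forall t, 0 <= Vnorm u ^ 2 + 2 * t * Vinner u w + t ^ 2 * Vnorm w ^ 2).
  { intros t. pose proof (Vnorm_sq_lin 1 u t w Hu Hw). pose proof (Vnorm_ge0 (vlin 1 u t w)). nra. }
  pose proof (Vnorm_ge0 u). pose proof (Vnorm_ge0 w).
  assert (Hsq : Vinner u w ^ 2 <= (Vnorm u * Vnorm w) ^ 2).
  { destruct (Req_dec (Vnorm w) 0) as [E|E].
    - rewrite E in Hquad |- *.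
      destruct (Req_dec (Vinner u w) 0) as [E'|E']; [rewrite E'; nra|].
      specialize (Hquad (- (Vnorm u ^ 2 + 1) / (2 * Vinner u w))).
      replace (2 * (- (Vnorm u ^ 2 + 1) / (2 * Vinner u w)) * Vinner u w)
        with (- (Vnorm u ^ 2 + 1)) in Hquad by (field; assumption). nra.
    - specialize (Hquad (- Vinner u w / Vnorm w ^ 2)).
      replace (Vnorm u ^ 2 + 2 * (- Vinner u w / Vnorm w ^ 2) * Vinner u w
                 + (- Vinner u w / Vnorm w ^ 2) ^ 2 * Vnorm w ^ 2)
        with ((Vnorm u ^ 2 * Vnorm w ^ 2 - Vinner u w ^ 2) / Vnorm w ^ 2) in Hquad
        by (field; assumption).
      assert (0 < Vnorm w ^ 2) by nra.
      apply (Rmult_le_compat_r (Vnorm w ^ 2)) in Hquad; [|lra].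
      unfold Rdiv in Hquad. rewrite Rmult_assoc, Rinv_l, Rmult_0_l in Hquad by lra. nra. }
  rewrite <- !Rsqr_pow2 in Hsq. apply Rsqr_le_abs_0 in Hsq.
  rewrite (Rabs_right (Vnorm u * Vnorm w)) in Hsq by nra. exact Hsq.
Qed.

Lemma Vnorm_triangle u w : ex_energy u -> ex_energy w ->
  Vnorm (vlin 1 u 1 w) <= Vnorm u + Vnorm w.
Proof.
  intros Hu Hw. pose proof (Vnorm_sq_lin 1 u 1 w Hu Hw) as Hsq.
  pose proof (Vinner_CS u w Hu Hw) as HCS. pose proof (Rle_abs (Vinner u w)).
  pose proof (Vnorm_ge0 u). pose proof (Vnorm_ge0 w). pose proof (Vnorm_ge0 (vlin 1 u 1 w)).
  apply Rsqr_incr_0_var; [rewrite !Rsqr_pow2|]; nra.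
Qed.

Lemma Vnorm_scal c u : Vnorm (vscal c u) = Rabs c * Vnorm u.
Proof.
  unfold Vnorm, vscal.
  rewrite (Series_ext _ (fun j => c ^ 2 * (INR j * u j) ^ 2)) by (intros; ring).
  rewrite Series_scal_l, <- (pow2_abs c).
  replace (PI ^ 2 * (Rabs c ^ 2 * Series (fun j => (INR j * u j) ^ 2)))
    with (Rabs c ^ 2 * (PI ^ 2 * Series (fun j => (INR j * u j) ^ 2))) by ring.
  rewrite sqrt_mult_alt, sqrt_pow2 by (apply Rabs_pos || apply pow2_ge_0). reflexivity.
Qed.

Lemma Vnorm_sub_sym u w : Vnorm (vsub u w) = Vnorm (vsub w u).
Proof.
  replace (vsub u w) with (vscal (-1) (vsub w u)).
  - rewrite Vnorm_scal, Rabs_m1. ring.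
  - apply functional_extensionality; intros j. unfold vsub, vscal. ring.
Qed.

Lemma Vnorm_sub_triangle a b c : ex_energy a -> ex_energy b -> ex_energy c ->
  Vnorm (vsub a c) <= Vnorm (vsub a b) + Vnorm (vsub b c).
Proof.
  intros Ha Hb Hc.
  replace (vsub a c) with (vlin 1 (vsub a b) 1 (vsub b c)).
  - rewrite !vsub_vlin. apply Vnorm_triangle; apply ex_energy_lin; assumption.
  - apply functional_extensionality; intros j. unfold vlin, vsub, vadd, vscal. ring.
Qed.

Lemma Vnorm_vzero : Vnorm vzero = 0.
Proof.
  replace vzero with (vscal 0 vzero).
  - rewrite Vnorm_scal, Rabs_R0. ring.
  - apply functional_extensionality; intros j. unfold vscal, vzero. ring.
Qed.

Lemma coef_le_Vnorm v j : ex_energy v -> (1 <= j)%nat -> PI * Rabs (v j) <= Vnorm v.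
Proof.
  intros Hv Hj. pose proof PI_RGT_0.
  pose proof (term_le_Series (fun j => (INR j * v j) ^ 2) (fun _ => pow2_ge_0 _) j Hv) as Hterm.
  assert (1 <= INR j) by (apply (le_INR 1); exact Hj).
  apply Rsqr_incr_0_var; [|apply Vnorm_ge0].
  rewrite !Rsqr_pow2, Vnorm_sq by exact Hv. unfold energy.
  rewrite Rpow_mult_distr, pow2_abs.
  pose proof (pow2_ge_0 (v j)). pose proof (pow2_ge_0 PI).
  apply Rmult_le_compat_l; [lra|]. cbv beta in Hterm. rewrite Rpow_mult_distr in Hterm.
  assert (1 <= INR j ^ 2) by nra. nra.
Qed.

Lemma Vnorm_le_add_sub a b : ex_energy a -> ex_energy b ->
  Vnorm a <= Vnorm b + Vnorm (vsub a b).
Proof.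
  intros Ha Hb. replace a with (vlin 1 b 1 (vsub a b)) at 1.
  - apply Vnorm_triangle; [exact Hb|]. rewrite vsub_vlin. apply ex_energy_lin; assumption.
  - apply functional_extensionality; intros j. unfold vlin, vadd, vscal, vsub. ring.
Qed.

Lemma Vnorm_eq0_vzero v : inV v -> Vnorm v = 0 -> v = vzero.
Proof.
  intros [Hv0 Hv] H0. apply functional_extensionality; intros j. unfold vzero.
  destruct j as [|j]; [exact Hv0|].
  pose proof (coef_le_Vnorm v (S j) Hv ltac:(lia)) as Hc. rewrite H0 in Hc.
  pose proof PI_RGT_0. pose proof (Rabs_pos (v (S j))).
  apply Rabs_eq_0. nra.
Qed.

Lemma Vnorm_pos_neq_vzero v : 0 < Vnorm v -> v <> vzero.
Proof. intros Hv E. rewrite E, Vnorm_vzero in Hv. lra. Qed.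

Lemma is_lim_seq_sum_n (f : nat -> nat -> R) (g : nat -> R) M :
  (forall j, is_lim_seq (fun a => f a j) (g j)) ->
  is_lim_seq (fun a => sum_n (f a) M) (sum_n g M).
Proof.
  intros Hf. induction M as [|M IH].
  - rewrite sum_O. apply (is_lim_seq_ext (fun a => f a 0%nat)); [intros; rewrite sum_O; reflexivity|].
    apply Hf.
  - rewrite sum_Sn. apply (is_lim_seq_ext (fun a => sum_n (f a) M + f a (S M))).
    { intros a. rewrite sum_Sn. reflexivity. }
    exact (is_lim_seq_plus' _ _ _ _ IH (Hf (S M))).
Qed.

Section Completeness.

Variable s : nat -> seqV.
Hypothesis s_inV : forall k, inV (s k).
Hypothesis s_cauchy : forall eps, 0 < eps -> exists N, forall a b,
  (N <= a)%nat -> (N <= b)%nat -> Vnorm (vsub (s a) (s b)) <= eps.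

Lemma coef_cauchy j : ex_finite_lim_seq (fun a => s a j).
Proof.
  pose proof PI_RGT_0. apply ex_lim_seq_cauchy_corr. intros [eps Heps]; simpl.
  destruct (s_cauchy (PI * eps / 2)) as [N HN]; [nra|].
  exists N. intros a b Ha Hb.
  destruct j as [|j].
  - rewrite (proj1 (s_inV a)), (proj1 (s_inV b)), Rminus_0_r, Rabs_R0. exact Heps.
  - pose proof (coef_le_Vnorm (vsub (s a) (s b)) (S j)
      (proj2 (inV_sub _ _ (s_inV a) (s_inV b))) ltac:(lia)) as Hc.
    specialize (HN a b Ha Hb). unfold vsub in Hc, HN. nra.
Qed.

Definition coef_limit : seqV := fun j => real (Lim_seq (fun a => s a j)).

Lemma coef_limit_correct j : is_lim_seq (fun a => s a j) (coef_limit j).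
Proof.
  destruct (coef_cauchy j) as [l Hl]. unfold coef_limit.
  rewrite (is_lim_seq_unique _ _ Hl). exact Hl.
Qed.

Lemma coef_limit_close eps : 0 < eps -> exists N, forall k, (N <= k)%nat ->
  ex_energy (vsub (s k) coef_limit) /\ Vnorm (vsub (s k) coef_limit) <= eps.
Proof.
  intros Heps. pose proof PI_RGT_0.
  destruct (s_cauchy eps Heps) as [N HN]. exists N. intros k Hk.
  set (term := fun x : seqV => fun j => (INR j * (s k j - x j)) ^ 2).
  assert (Hsums : forall M, sum_n (term coef_limit) M <= (eps / PI) ^ 2).
  { intros M.
    assert (Hlim : is_lim_seq (fun a => sum_n (term (s (a + N)%nat)) M) (sum_n (term coef_limit) M)).
    { apply (is_lim_seq_sum_n (fun a => term (s (a + N)%nat))). intros j.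
      apply (is_lim_seq_continuous (fun y => (INR j * (s k j - y)) ^ 2)); [reg|].
      apply (is_lim_seq_incr_n (fun a => s a j)), coef_limit_correct. }
    assert (Hle : Rbar_le (sum_n (term coef_limit) M) ((eps / PI) ^ 2)).
    { refine (is_lim_seq_le _ (fun _ => (eps / PI) ^ 2) _ _ _ Hlim (is_lim_seq_const _)).
      intros a. pose proof (HN k (a + N)%nat Hk ltac:(lia)) as Hd.
      pose proof (inV_sub _ _ (s_inV k) (s_inV (a + N)%nat)) as [_ He].
      eapply Rle_trans; [apply (sum_n_le_Series _ (fun _ => pow2_ge_0 _) M He)|].
      pose proof (Vnorm_sq _ He). pose proof (Vnorm_ge0 (vsub (s k) (s (a + N)%nat))).
      fold (energy (vsub (s k) (s (a + N)%nat))).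
      apply (Rmult_le_reg_l (PI ^ 2)); [nra|].
      replace (PI ^ 2 * (eps / PI) ^ 2) with (eps ^ 2) by (field; lra). nra. }
    exact Hle. }
  destruct (ex_series_bounded_sums _ (fun _ => pow2_ge_0 _) _ Hsums) as [Hex Hbound].
  split; [exact Hex|].
  apply Vnorm_le; [lra|]. fold (energy (vsub (s k) coef_limit)) in Hbound.
  apply (Rmult_le_compat_l (PI ^ 2)) in Hbound; [|nra].
  replace (PI ^ 2 * (eps / PI) ^ 2) with (eps ^ 2) in Hbound by (field; lra). exact Hbound.
Qed.

Lemma inV_complete : exists z, inV z /\
  forall eps, 0 < eps -> exists N, forall k, (N <= k)%nat -> Vnorm (vsub (s k) z) <= eps.
Proof.
  exists coef_limit. split.
  - destruct (coef_limit_close 1 Rlt_0_1) as [N HN]. destruct (HN N (le_n N)) as [Hex _].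
    split.
    + unfold coef_limit. rewrite (Lim_seq_ext _ (fun _ => 0)) by (intros a; apply s_inV).
      rewrite Lim_seq_const. reflexivity.
    + replace coef_limit with (vsub (s N) (vsub (s N) coef_limit)).
      * rewrite (vsub_vlin (s N) (vsub (s N) coef_limit)).
        apply ex_energy_lin; [apply s_inV | exact Hex].
      * apply functional_extensionality; intros j. unfold vsub. ring.
  - intros eps Heps. destruct (coef_limit_close eps Heps) as [N HN].
    exists N. intros k Hk. apply HN, Hk.
Qed.

End Completeness.
(** * Sine series and periods *)

Definition telescoping_weight (j : nat) : R := / (INR j * (INR j + 1)).

Lemma telescoping_weight_ge0 j : 0 <= telescoping_weight j.
Proof.
  unfold telescoping_weight. destruct j as [|j].
  - simpl. rewrite Rmult_0_l, Rinv_0. lra.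
  - pose proof (lt_0_INR (S j) ltac:(lia)).
    apply Rlt_le, Rinv_0_lt_compat. nra.
Qed.

Lemma sum_n_telescoping_weight M : sum_n telescoping_weight M = 1 - / (INR M + 1).
Proof.
  induction M as [|M IH].
  - rewrite sum_O. unfold telescoping_weight. simpl.
    rewrite Rmult_0_l, Rinv_0, Rplus_0_l, Rinv_1. ring.
  - rewrite sum_Sn, IH. unfold plus, telescoping_weight; simpl.
    change (1 - / (INR M + 1) + / (INR (S M) * (INR (S M) + 1)) = 1 - / (INR (S M) + 1)).
    rewrite S_INR. pose proof (pos_INR M). field. lra.
Qed.

Lemma ex_series_telescoping_weight : ex_series telescoping_weight.
Proof.
  apply (ex_series_bounded_sums _ telescoping_weight_ge0 1). intros M.
  rewrite sum_n_telescoping_weight. pose proof (pos_INR M).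
  assert (0 < / (INR M + 1)) by (apply Rinv_0_lt_compat; lra). lra.
Qed.

(* AM-GM: [|x| <= (j x)^2 + 1/(4 j^2)], and [1/(4 j^2) <= 1/(j (j+1))]. *)
Lemma abs_le_energy_term x j : (1 <= j)%nat ->
  Rabs x <= (INR j * x) ^ 2 + telescoping_weight j.
Proof.
  intros Hj. unfold telescoping_weight.
  assert (HJ : 1 <= INR j) by (apply (le_INR 1); exact Hj).
  set (J := INR j) in *. set (y := / J).
  assert (Hy : J * y = 1) by (unfold y; field; lra).
  assert (Hy0 : 0 < y) by (unfold y; apply Rinv_0_lt_compat; lra).
  assert (Hw : y * y / 4 <= / (J * (J + 1))).
  { rewrite Rinv_mult. unfold Rdiv. fold y.
    assert (y / 4 <= / (J + 1)).
    { apply (Rmult_le_reg_l (4 * J * (J + 1))); [nra|].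
      replace (4 * J * (J + 1) * (y / 4)) with (J + 1) by (unfold Rdiv; nra).
      replace (4 * J * (J + 1) * / (J + 1)) with (4 * J) by (field; lra). lra. }
    nra. }
  pose proof (pow2_ge_0 (J * Rabs x - y / 2)).
  rewrite <- (pow2_abs (J * x)), Rabs_mult, (Rabs_right J) by lra.
  pose proof (Rabs_pos x). nra.
Qed.

Lemma inV_abs_summable v : inV v -> ex_series (fun j => Rabs (v j)).
Proof.
  intros [H0 Hv].
  apply (@ex_series_le R_AbsRing R_CompleteNormedModule _ (fun j => (INR j * v j) ^ 2 + telescoping_weight j)).
  - intros j. change (norm ?x) with (Rabs x). rewrite Rabs_Rabsolu.
    destruct j as [|j].
    + rewrite H0, Rabs_R0. pose proof (telescoping_weight_ge0 0). pose proof (pow2_ge_0 (INR 0 * 0)). lra.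
    + apply abs_le_energy_term. lia.
  - exact (ex_series_plus _ _ Hv ex_series_telescoping_weight).
Qed.

Lemma sin_INR_mult_PI n : sin (INR n * PI) = 0.
Proof. apply sin_eq_0_1. exists (Z.of_nat n). rewrite <- INR_IZR_INZ. reflexivity. Qed.

Lemma sin_mul_sin_RInt (j k : nat) : (1 <= j)%nat ->
  is_RInt (fun x => sin (INR k * x) * sin (INR j * x)) 0 PI
    (if Nat.eq_dec k j then PI / 2 else 0).
Proof.
  intros Hj. assert (Jp : 0 < INR j) by (apply lt_0_INR; lia).
  pose proof PI_RGT_0.
  destruct (Nat.eq_dec k j) as [->|Hkj].
  - set (F := fun x => x / 2 - sin (2 * INR j * x) / (4 * INR j)).
    assert (HI : is_RInt (fun x => sin (INR j * x) * sin (INR j * x)) 0 PI (minus (F PI) (F 0))).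
    { apply (is_RInt_derive F).
      - intros x _. unfold F. auto_derive; [exact I|].
        replace (2 * INR j * x) with (INR j * x + INR j * x) by ring. rewrite cos_plus.
        pose proof (sin2_cos2 (INR j * x)). unfold Rsqr in *. field_simplify; [nra|lra].
      - intros x _. apply (ex_derive_continuous (fun y => sin (INR j * y) * sin (INR j * y))).
        auto_derive. exact I. }
    replace (minus (F PI) (F 0)) with (PI / 2) in HI; [exact HI|].
    unfold F, minus, plus, opp; simpl.
    replace (2 * INR j * PI) with (INR (2 * j) * PI) by (rewrite mult_INR; simpl; ring).
    rewrite sin_INR_mult_PI, Rmult_0_r, sin_0. field. lra.
  - assert (Hd : INR j - INR k <> 0) by (intros E; apply Hkj, INR_eq; lra).
    assert (Hs : 0 < INR j + INR k) by (pose proof (pos_INR k); lra).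
    set (F := fun x => sin ((INR j - INR k) * x) / (2 * (INR j - INR k))
                       - sin ((INR j + INR k) * x) / (2 * (INR j + INR k))).
    assert (HI : is_RInt (fun x => sin (INR k * x) * sin (INR j * x)) 0 PI (minus (F PI) (F 0))).
    { apply (is_RInt_derive F).
      - intros x _. unfold F. auto_derive; [exact I|].
        replace ((INR j - INR k) * x) with (INR j * x - INR k * x) by ring.
        replace ((INR j + INR k) * x) with (INR j * x + INR k * x) by ring.
        rewrite cos_plus, cos_minus. field. split; lra.
      - intros x _. apply (ex_derive_continuous (fun y => sin (INR k * y) * sin (INR j * y))).
        auto_derive. exact I. }
    replace (minus (F PI) (F 0)) with 0 in HI; [exact HI|].
    unfold F, minus, plus, opp; simpl.
    replace ((INR j - INR k) * PI) with (INR j * PI - INR k * PI) by ring.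
    replace ((INR j + INR k) * PI) with (INR (j + k) * PI) by (rewrite plus_INR; ring).
    rewrite sin_minus, !sin_INR_mult_PI, !Rmult_0_r, sin_0. field. split; lra.
Qed.

Lemma Series_zero : Series (fun _ => 0) = 0.
Proof. rewrite (Series_ext _ (fun _ => 0 * 0)) by (intros; ring). rewrite Series_scal_l. ring. Qed.

Lemma sum_f_R0_kronecker (a : nat -> R) c j M :
  sum_f_R0 (fun k => a k * (if Nat.eq_dec k j then c else 0)) M
  = if Compare_dec.le_dec j M then a j * c else 0.
Proof.
  induction M as [|M IH]; cbn [sum_f_R0].
  - destruct (Nat.eq_dec 0 j), (Compare_dec.le_dec j 0); try lia; subst; ring.
  - rewrite IH.
    destruct (Nat.eq_dec (S M) j), (Compare_dec.le_dec j M), (Compare_dec.le_dec j (S M));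
      try lia; subst; ring.
Qed.

Lemma sine_partial_sum_RInt (a : nat -> R) j M : (1 <= j)%nat -> (j <= M)%nat ->
  is_RInt (fun x => sum_n (fun k => a k * sin (INR k * x)) M * sin (INR j * x)) 0 PI
    (a j * (PI / 2)).
Proof.
  intros Hj HjM.
  assert (HI : forall M, is_RInt (fun x => sum_n (fun k => a k * sin (INR k * x)) M * sin (INR j * x))
      0 PI (sum_n (fun k => a k * (if Nat.eq_dec k j then PI / 2 else 0)) M)).
  { induction M0 as [|M0 IH].
    - rewrite sum_O.
      apply (is_RInt_ext (fun x => scal (a 0%nat) (sin (INR 0 * x) * sin (INR j * x)))).
      { intros x _. rewrite sum_O. unfold scal; simpl. unfold mult; simpl. ring. }
      exact (is_RInt_scal _ 0 PI (a 0%nat) _ (sin_mul_sin_RInt j 0 Hj)).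
    - rewrite sum_Sn.
      apply (is_RInt_ext (fun x => plus (sum_n (fun k => a k * sin (INR k * x)) M0 * sin (INR j * x))
                                   (scal (a (S M0)) (sin (INR (S M0) * x) * sin (INR j * x))))).
      { intros x _. rewrite sum_Sn. unfold scal, plus; simpl. unfold mult; simpl. ring. }
      exact (is_RInt_plus _ _ 0 PI _ _ IH (is_RInt_scal _ 0 PI (a (S M0)) _ (sin_mul_sin_RInt j (S M0) Hj))). }
  specialize (HI M). rewrite sum_n_Reals, sum_f_R0_kronecker in HI.
  destruct (Compare_dec.le_dec j M); [exact HI | lia].
Qed.

Lemma abs_mul_sin_le c y : Rabs (c * sin y) <= Rabs c.
Proof.
  rewrite Rabs_mult. rewrite <- (Rmult_1_r (Rabs c)) at 2.
  apply Rmult_le_compat_l; [apply Rabs_pos | apply Rabs_le, SIN_bound].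
Qed.

Lemma sine_partial_sum_le_tail (a : nat -> R) x M :
  ex_series (fun k => Rabs (a k)) -> Series (fun k => a k * sin (INR k * x)) = 0 ->
  Rabs (sum_n (fun k => a k * sin (INR k * x)) M) <= Series (fun k => Rabs (a (S M + k)%nat)).
Proof.
  intros Ha Hx.
  assert (Htail : ex_series (fun k => Rabs (a (S M + k)%nat)))
    by exact (proj1 (ex_series_incr_n (fun k => Rabs (a k)) (S M)) Ha).
  assert (Hex : ex_series (fun k => a k * sin (INR k * x))).
  { apply (@ex_series_le R_AbsRing R_CompleteNormedModule _ (fun k => Rabs (a k)));
      [intros k; apply abs_mul_sin_le | exact Ha]. }
  assert (Hex_tail : ex_series (fun k => Rabs (a (S M + k)%nat * sin (INR (S M + k) * x)))).
  { apply (@ex_series_le R_AbsRing R_CompleteNormedModule _ (fun k => Rabs (a (S M + k)%nat)));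
      [|exact Htail].
    intros k. change (norm ?y) with (Rabs y). rewrite Rabs_Rabsolu. apply abs_mul_sin_le. }
  rewrite (Series_incr_n _ (S M)) in Hx by (lia || exact Hex). simpl pred in Hx.
  rewrite <- sum_n_Reals in Hx.
  replace (sum_n (fun k => a k * sin (INR k * x)) M)
    with (- Series (fun k => a (S M + k)%nat * sin (INR (S M + k) * x))) by lra.
  rewrite Rabs_Ropp. eapply Rle_trans; [apply Series_Rabs, Hex_tail|].
  apply Series_le; [|exact Htail]. intros k. split; [apply Rabs_pos | apply abs_mul_sin_le].
Qed.

Lemma Series_tail_small (b : nat -> R) : ex_series b ->
  forall eps, 0 < eps -> exists N, forall M, (N <= M)%nat -> Rabs (Series (fun k => b (S M + k)%nat)) < eps.
Proof.
  intros Hb eps Heps.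
  assert (Hlim : is_lim_seq (sum_n b) (Series b)) by exact (Series_correct b Hb).
  destruct (proj2 (is_lim_seq_spec _ _) Hlim (mkposreal eps Heps)) as [N HN].
  exists N. intros M HM. specialize (HN M HM). simpl in HN.
  rewrite (Series_incr_n b (S M)) in HN by (lia || exact Hb). simpl pred in HN.
  rewrite <- sum_n_Reals in HN.
  replace (sum_n b M - (sum_n b M + Series (fun k => b (S M + k)%nat)))
    with (- Series (fun k => b (S M + k)%nat)) in HN by ring.
  rewrite Rabs_Ropp in HN. exact HN.
Qed.

(* Integrate the partial sums against [sin (j x)]; the tails of [sum |a_k|] bound the error. *)
Lemma sine_coef_unique (a : nat -> R) :
  ex_series (fun k => Rabs (a k)) ->
  (forall x, 0 < x < PI -> Series (fun k => a k * sin (INR k * x)) = 0) ->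
  forall j, (1 <= j)%nat -> a j = 0.
Proof.
  intros Ha H0 j Hj. pose proof PI_RGT_0.
  assert (Hclosed : forall x, 0 <= x <= PI -> Series (fun k => a k * sin (INR k * x)) = 0).
  { intros x Hx. destruct (Req_dec x 0) as [->|Hx0]; [|destruct (Req_dec x PI) as [->|HxPI]].
    - rewrite (Series_ext _ (fun _ => 0)); [apply Series_zero|].
      intros k. rewrite Rmult_0_r, sin_0. ring.
    - rewrite (Series_ext _ (fun _ => 0)); [apply Series_zero|].
      intros k. rewrite sin_INR_mult_PI. ring.
    - apply H0. lra. }
  assert (Hsmall : forall eps, 0 < eps -> Rabs (a j * (PI / 2)) <= PI * eps).
  { intros eps Heps.
    destruct (Series_tail_small _ Ha eps Heps) as [N HN].
    set (M := max N j).
    assert (Hbound : forall x, 0 <= x <= PI ->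
        Rabs (sum_n (fun k => a k * sin (INR k * x)) M * sin (INR j * x)) <= eps).
    { intros x Hx.
      pose proof (sine_partial_sum_le_tail a x M Ha (Hclosed x Hx)) as Htail.
      pose proof (HN M ltac:(lia)) as Htail_small. rewrite Rabs_pos_eq in Htail_small
        by (apply Series_ge0; [intros; apply Rabs_pos | exact (proj1 (ex_series_incr_n _ (S M)) Ha)]).
      eapply Rle_trans; [apply abs_mul_sin_le|]. lra. }
    pose proof (sine_partial_sum_RInt a j M Hj ltac:(lia)) as HI.
    pose proof (abs_RInt_le_const _ 0 PI eps ltac:(lra) (ex_intro _ _ HI) Hbound) as Hle.
    rewrite (is_RInt_unique _ _ _ _ HI) in Hle. lra. }
  destruct (Req_dec (a j) 0) as [E|E]; [exact E|]. exfalso.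
  assert (0 < Rabs (a j)) by (apply Rabs_pos_lt, E).
  specialize (Hsmall (Rabs (a j) / 4) ltac:(lra)).
  rewrite Rabs_mult, (Rabs_right (PI / 2)) in Hsmall by lra. nra.
Qed.

Definition t_periodic (v : seqV) (T : R) : Prop :=
  forall t x, 0 < x < PI -> vfun v (t + T) x = vfun v t x.

Definition mult_supported (n : nat) (v : seqV) : Prop :=
  forall j, v j <> 0 -> (j mod n = 0)%nat.

Lemma abs_mul_cos_sin_le c y z : Rabs (c * cos y * sin z) <= Rabs c.
Proof.
  eapply Rle_trans; [apply abs_mul_sin_le|]. rewrite Rabs_mult.
  rewrite <- (Rmult_1_r (Rabs c)) at 2.
  apply Rmult_le_compat_l; [apply Rabs_pos | apply Rabs_le, COS_bound].
Qed.

Lemma ex_series_vfun_terms v t x : inV v ->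
  ex_series (fun j => v j * cos (INR j * t) * sin (INR j * x)).
Proof.
  intros Hv. apply (@ex_series_le R_AbsRing R_CompleteNormedModule _ (fun j => Rabs (v j))).
  - intros j. apply abs_mul_cos_sin_le.
  - apply inV_abs_summable, Hv.
Qed.

Lemma period_cos_one v T : inV v -> t_periodic v T ->
  forall j, v j <> 0 -> cos (INR j * T) = 1.
Proof.
  intros Hv Hper j Hj.
  assert (Hj1 : (1 <= j)%nat) by (destruct j; [destruct Hv as [H0 _]; congruence | lia]).
  set (a := fun k => v k * (cos (INR k * (0 + T)) - cos (INR k * 0))).
  assert (Ha : ex_series (fun k => Rabs (a k))).
  { apply (@ex_series_le R_AbsRing R_CompleteNormedModule _ (fun k => 2 * Rabs (v k))).
    - intros k. change (norm ?y) with (Rabs y). rewrite Rabs_Rabsolu. unfold a.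
      rewrite Rabs_mult. pose proof (Rabs_pos (v k)).
      pose proof (COS_bound (INR k * (0 + T))). pose proof (COS_bound (INR k * 0)).
      assert (Rabs (cos (INR k * (0 + T)) - cos (INR k * 0)) <= 2) by (apply Rabs_le; lra).
      nra.
    - exact (ex_series_scal_l _ _ (inV_abs_summable v Hv)). }
  assert (Hsine : forall x, 0 < x < PI -> Series (fun k => a k * sin (INR k * x)) = 0).
  { intros x Hx. specialize (Hper 0 x Hx). unfold vfun in Hper.
    rewrite (Series_ext _ (fun k => v k * cos (INR k * (0 + T)) * sin (INR k * x)
                                    - v k * cos (INR k * 0) * sin (INR k * x)))
      by (intros k; unfold a; ring).
    rewrite Series_minus by apply ex_series_vfun_terms, Hv. lra. }
  pose proof (sine_coef_unique a Ha Hsine j Hj1) as Haj. unfold a in Haj.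
  rewrite Rmult_0_r, cos_0, Rplus_0_l in Haj.
  apply Rmult_integral in Haj. destruct Haj; [congruence | lra].
Qed.

Lemma cos_one_sin_zero y : cos y = 1 -> sin y = 0.
Proof. intros H. pose proof (sin2_cos2 y) as H2. unfold Rsqr in H2. rewrite H in H2. nra. Qed.

Lemma cos_one_add T a b : cos (INR a * T) = 1 -> cos (INR b * T) = 1 -> cos (INR (a + b) * T) = 1.
Proof.
  intros Ha Hb. rewrite plus_INR, Rmult_plus_distr_r, cos_plus, Ha, Hb, (cos_one_sin_zero _ Ha). ring.
Qed.

Lemma cos_one_sub T a b : (b <= a)%nat ->
  cos (INR a * T) = 1 -> cos (INR b * T) = 1 -> cos (INR (a - b) * T) = 1.
Proof.
  intros Hle Ha Hb. rewrite minus_INR, Rmult_minus_distr_r by exact Hle.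
  rewrite cos_minus, Ha, Hb, (cos_one_sin_zero _ Ha), (cos_one_sin_zero _ Hb). ring.
Qed.

Lemma cos_one_mul T b k : cos (INR b * T) = 1 -> cos (INR (k * b) * T) = 1.
Proof.
  intros Hb. induction k as [|k IH].
  - simpl. rewrite Rmult_0_l. apply cos_0.
  - replace (S k * b)%nat with (k * b + b)%nat by lia. apply cos_one_add; assumption.
Qed.

Lemma cos_one_mod T a b :
  cos (INR a * T) = 1 -> cos (INR b * T) = 1 -> cos (INR (a mod b) * T) = 1.
Proof.
  intros Ha Hb1. rewrite (Nat.Div0.mod_eq a b).
  apply cos_one_sub; [pose proof (Nat.Div0.mul_div_le a b); lia | exact Ha |].
  rewrite Nat.mul_comm. apply cos_one_mul, Hb1.
Qed.

Lemma cos_ne1_between T : 0 < T < 2 * PI -> cos T <> 1.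
Proof.
  intros HT E. pose proof PI_RGT_0.
  destruct (sin_eq_O_2PI_0 T) as [H1|[H1|H1]]; try lra.
  - apply cos_one_sin_zero, E.
  - subst T. rewrite cos_PI in E. lra.
Qed.

(* All indices of nonzero modes are multiples of the least [N >= 1] with [cos (N T) = 1]. *)
Lemma period_support v T : inV v -> 0 < T < 2 * PI -> t_periodic v T ->
  exists n, (2 <= n)%nat /\ mult_supported n v.
Proof.
  intros Hv HT Hper. pose proof (period_cos_one v T Hv Hper) as Hcos.
  destruct (classic (exists j, v j <> 0)) as [[j Hj]|Hzero].
  2: { exists 2%nat. split; [lia|]. intros j Hj. exfalso. eauto. }
  set (P := fun k => (1 <= k)%nat /\ cos (INR k * T) = 1).
  assert (HPj : P j).
  { split; [destruct j; [destruct Hv as [H0 _]; congruence | lia] | apply Hcos, Hj]. }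
  destruct (dec_inh_nat_subset_has_unique_least_element P (fun k => classic (P k)) (ex_intro _ j HPj))
    as [N [[[HN1 HNcos] HNmin] _]].
  exists N. split.
  - destruct (Nat.eq_dec N 1) as [->|]; [|lia].
    exfalso. apply (cos_ne1_between T HT). rewrite <- HNcos. f_equal. simpl. ring.
  - intros k Hk. pose proof (cos_one_mod T k N (Hcos k Hk) HNcos) as Hmod.
    destruct (Nat.eq_dec (k mod N) 0) as [E|E]; [exact E|]. exfalso.
    assert (N <= k mod N)%nat by (apply HNmin; split; [lia | exact Hmod]).
    pose proof (Nat.mod_upper_bound k N ltac:(lia)). lia.
Qed.

(** * Maximizers of G *)

(* [f - g] has a local maximum at [0]. *)
Lemma touching_derivatives_eq (f g : R -> R) a b :
  derivable_pt_lim f 0 a -> derivable_pt_lim g 0 b ->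
  locally 0 (fun s => f s <= g s) -> f 0 = g 0 -> a = b.
Proof.
  intros Hf Hg [r Hr] H0.
  set (pr := exist (fun l => derivable_pt_lim (fun s => f s - g s) 0 l) (a - b)
               (derivable_pt_lim_minus f g 0 a b Hf Hg)).
  assert (Hmax : derive_pt (fun s => f s - g s) 0 pr = 0).
  { apply (deriv_maximum _ (- r) r); [destruct r; simpl; lra | destruct r; simpl; lra|].
    intros s Hs1 Hs2. assert (f s <= g s) by (apply Hr; change (Rabs (s - 0) < r); apply Rabs_def1; lra).
    lra. }
  simpl in Hmax. lra.
Qed.

Lemma vadd_vscal_0 z u : vadd z (vscal 0 u) = z.
Proof. apply functional_extensionality; intros j. unfold vadd, vscal. ring. Qed.

Lemma dual_scal (l : seqV -> R) s u : is_dual l -> inV u -> l (vscal s u) = s * l u.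
Proof.
  intros [Hlin _] Hu. specialize (Hlin u u s 0 Hu Hu).
  rewrite vadd_vscal_0 in Hlin. lra.
Qed.

Lemma frechet_directional (F : seqV -> R) (DF : seqV -> seqV -> R) z u :
  is_frechet_on inV F DF -> inV z -> inV u ->
  derivable_pt_lim (fun s => F (vadd z (vscal s u))) 0 (DF z u).
Proof.
  intros HF Hz Hu eps Heps.
  destruct (HF z Hz) as [Hdual Hfr].
  set (c := Vnorm u + 1). assert (Hc : 0 < c) by (pose proof (Vnorm_ge0 u); unfold c; lra).
  destruct (Hfr (eps / (2 * c))) as [delta [Hdelta Hsmall]]; [apply Rdiv_lt_0_compat; lra|].
  exists (mkposreal (delta / c) (Rdiv_lt_0_compat _ _ Hdelta Hc)). simpl. intros s Hs0 Hs.
  assert (Hnorm : Vnorm (vscal s u) = Rabs s * Vnorm u) by apply Vnorm_scal.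
  assert (Hsu : Vnorm (vscal s u) < delta).
  { rewrite Hnorm. apply (Rmult_lt_compat_r c) in Hs; [|exact Hc].
    unfold Rdiv in Hs. rewrite Rmult_assoc, Rinv_l, Rmult_1_r in Hs by lra.
    pose proof (Rabs_pos s). unfold c in Hs. nra. }
  specialize (Hsmall (vscal s u) (inV_scal s u Hu) Hsu).
  rewrite vadd_vscal_vlin in Hsmall.
  specialize (Hsmall (inV_lin 1 z s u Hz Hu)).
  rewrite (dual_scal _ s u Hdual Hu), Hnorm in Hsmall.
  rewrite Rplus_0_l, vadd_vscal_0, vadd_vscal_vlin.
  replace ((F (vlin 1 z s u) - F z) / s - DF z u) with ((F (vlin 1 z s u) - F z - s * DF z u) / s)
    by (field; exact Hs0).
  assert (Hs_pos : 0 < Rabs s) by (apply Rabs_pos_lt, Hs0).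
  rewrite Rabs_div by exact Hs0. apply (Rmult_lt_reg_r (Rabs s)); [exact Hs_pos|].
  unfold Rdiv. rewrite Rmult_assoc, Rinv_l, Rmult_1_r by lra.
  eapply Rle_lt_trans; [exact Hsmall|].
  assert (Hratio : Vnorm u / c <= 1).
  { apply (Rmult_le_reg_r c); [exact Hc|]. unfold Rdiv.
    rewrite Rmult_assoc, Rinv_l by lra. unfold c. lra. }
  replace (eps / (2 * c) * (Rabs s * Vnorm u)) with (eps / 2 * Rabs s * (Vnorm u / c)) by (field; lra).
  assert (0 < eps / 2 * Rabs s) by nra. nra.
Qed.

Lemma frechet_continuous (F : seqV -> R) (DF : seqV -> seqV -> R) z :
  is_frechet_on inV F DF -> inV z ->
  forall eps, 0 < eps -> exists delta, 0 < delta /\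
    forall w, inV w -> Vnorm (vsub w z) < delta -> Rabs (F w - F z) <= eps.
Proof.
  intros HF Hz eps Heps.
  destruct (HF z Hz) as [[_ [C HC]] Hfr].
  destruct (Hfr 1 Rlt_0_1) as [d1 [Hd1 Hsmall]].
  pose proof (Rabs_pos C).
  exists (Rmin d1 (eps / (1 + Rabs C))). split; [apply Rmin_pos; [exact Hd1 | apply Rdiv_lt_0_compat; lra]|].
  intros w Hw Hwz. set (h := vsub w z).
  assert (Hh : inV h) by (apply inV_sub; assumption).
  assert (Hzh : vadd z h = w) by (apply functional_extensionality; intros j; unfold vadd, h, vsub; ring).
  specialize (Hsmall h Hh (Rlt_le_trans _ _ _ Hwz (Rmin_l _ _)) ltac:(rewrite Hzh; exact Hw)).
  specialize (HC h Hh). rewrite Hzh in Hsmall.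
  pose proof (Vnorm_ge0 h). pose proof (Rle_abs C).
  assert (Hlin : Rabs (DF z h) <= Rabs C * Vnorm h) by (eapply Rle_trans; [exact HC | nra]).
  assert (Hh_small : (1 + Rabs C) * Vnorm h <= eps).
  { pose proof (Rmin_r d1 (eps / (1 + Rabs C))) as Hmin.
    apply (Rmult_le_compat_l (1 + Rabs C)) in Hmin; [|lra].
    replace ((1 + Rabs C) * (eps / (1 + Rabs C))) with eps in Hmin by (field; lra).
    unfold h in *. nra. }
  apply Rabs_le_between in Hsmall. apply Rabs_le_between in Hlin. apply Rabs_le. lra.
Qed.

Lemma Rpower_base_1 y : Rpower 1 y = 1.
Proof. unfold Rpower. rewrite ln_1, Rmult_0_r. apply exp_0. Qed.

Section Maximizers.

Variables (q : R) (G : seqV -> R) (DG : seqV -> seqV -> R) (m : R).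
Hypothesis G_frechet : is_frechet_on inV G DG.
Hypothesis m_sup : is_m G q m.

Lemma G_le_sup v : inV v -> 0 < Vnorm v -> G v <= m * Rpower (Vnorm v) (q + 1).
Proof.
  intros Hv Hpos.
  assert (Hpow : powr (Vnorm v) (q + 1) = Rpower (Vnorm v) (q + 1))
    by (unfold powr; destruct (Rle_dec (Vnorm v) 0); [lra | reflexivity]).
  assert (Hp : 0 < Rpower (Vnorm v) (q + 1)) by apply exp_pos.
  assert (Hratio : G v / Rpower (Vnorm v) (q + 1) <= m).
  { apply (proj1 m_sup). exists v. rewrite Hpow. split; [exact Hv|].
    split; [apply Vnorm_pos_neq_vzero, Hpos | reflexivity]. }
  apply (Rmult_le_compat_r (Rpower (Vnorm v) (q + 1))) in Hratio; [|lra].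
  unfold Rdiv in Hratio. rewrite Rmult_assoc, Rinv_l in Hratio by lra. lra.
Qed.

(* Along the line [s |-> z + s u] through a maximizer, [G] touches [m ||.||^(q+1)] from below. *)
Lemma lagrange_K0 z u : K0 G m z -> inV u -> DG z u = (q + 1) * m * Vinner z u.
Proof.
  intros [Hz [Hnz HGz]] Hu.
  set (X := fun s => 1 + 2 * s * Vinner z u + s ^ 2 * Vnorm u ^ 2).
  assert (HX : forall s, Vnorm (vadd z (vscal s u)) ^ 2 = X s).
  { intros s. rewrite vadd_vscal_vlin, Vnorm_sq_lin by (apply Hz || apply Hu).
    unfold X. rewrite Hnz. ring. }
  set (p := (q + 1) / 2).
  assert (Hpos : locally 0 (fun s => 0 < X s)).
  { assert (Hcont : continuous X 0).
    { apply (@ex_derive_continuous R_AbsRing R_NormedModule). unfold X. auto_derive. exact I. }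
    apply (Hcont (fun y => 0 < y)), open_gt. unfold X. lra. }
  assert (Hle : locally 0 (fun s => G (vadd z (vscal s u)) <= m * Rpower (X s) p)).
  { apply (filter_imp (fun s => 0 < X s)); [|exact Hpos]. intros s HXs.
    pose proof (Vnorm_ge0 (vadd z (vscal s u))).
    assert (Hsqrt : Vnorm (vadd z (vscal s u)) = Rpower (X s) (/ 2)).
    { rewrite Rpower_sqrt, <- HX by exact HXs. symmetry. apply sqrt_pow2. lra. }
    assert (Hin : inV (vadd z (vscal s u))) by (rewrite vadd_vscal_vlin; apply inV_lin; assumption).
    assert (0 < Vnorm (vadd z (vscal s u))) by (rewrite Hsqrt; apply exp_pos).
    eapply Rle_trans; [apply G_le_sup; assumption|].
    rewrite Hsqrt, Rpower_mult. unfold p. right. f_equal. f_equal. field. }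
  assert (HdX : derivable_pt_lim X 0 (2 * Vinner z u))
    by (apply is_derive_Reals; unfold X; auto_derive; [exact I | ring]).
  assert (Hdpow : derivable_pt_lim (fun y => Rpower y p) (X 0) (p * Rpower (X 0) (p - 1)))
    by (apply derivable_pt_lim_power; unfold X; lra).
  assert (HX0 : X 0 = 1) by (unfold X; ring).
  pose proof (derivable_pt_lim_comp X (fun y => Rpower y p) 0 _ _ HdX Hdpow) as Hcomp.
  rewrite HX0, Rpower_base_1 in Hcomp.
  pose proof (derivable_pt_lim_scal _ m 0 _ Hcomp) as Hscal.
  rewrite (touching_derivatives_eq _ _ _ _ (frechet_directional G DG z u G_frechet Hz Hu) Hscal Hle).
  - unfold p. field.
  - unfold mult_real_fct, comp. rewrite vadd_vscal_0, HX0, Rpower_base_1, HGz. ring.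
Qed.
Lemma lagrange_K0_sub z1 z2 : K0 G m z1 -> K0 G m z2 ->
  DG z1 (vsub z1 z2) - DG z2 (vsub z1 z2) = (q + 1) * m * Vnorm (vsub z1 z2) ^ 2.
Proof.
  intros Hz1 Hz2.
  assert (Hd : inV (vsub z1 z2)) by (apply inV_sub; [apply Hz1 | apply Hz2]).
  rewrite (lagrange_K0 z1), (lagrange_K0 z2), <- Vinner_diag by (assumption || apply Hd).
  set (d := vsub z1 z2).
  assert (Hexp : Vinner (vlin 1 z1 (-1) z2) d = Vinner z1 d - Vinner z2 d)
    by (rewrite Vinner_linl by (apply Hz1 || apply Hz2 || apply Hd); ring).
  unfold d at 3. rewrite vsub_vlin, Hexp. ring.
Qed.

Hypothesis q_gt1 : 1 < q.
Hypothesis m_pos : 0 < m.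
Hypothesis DG_compact : compact_dual_map inV DG.

Lemma K0_cauchy_of_dual_cvg (s : nat -> seqV) (l : seqV -> R) :
  (forall k, K0 G m (s k)) ->
  (forall eps, 0 < eps -> exists N, forall k, (N <= k)%nat -> dual_close (DG (s k)) l eps) ->
  forall eps, 0 < eps -> exists N, forall a b, (N <= a)%nat -> (N <= b)%nat ->
    Vnorm (vsub (s a) (s b)) <= eps.
Proof.
  intros Hs Hconv eps Heps.
  assert (Hqm : 0 < (q + 1) * m) by nra.
  destruct (Hconv (eps * ((q + 1) * m) / 2)) as [N HN]; [nra|].
  exists N. intros a b Ha Hb.
  assert (Hd : inV (vsub (s a) (s b))) by (apply inV_sub; apply Hs).
  pose proof (lagrange_K0_sub _ _ (Hs a) (Hs b)) as Hdiff.
  pose proof (HN a Ha _ Hd) as Hca. pose proof (HN b Hb _ Hd) as Hcb.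
  set (d := Vnorm (vsub (s a) (s b))) in *.
  assert (Hsq : (q + 1) * m * d ^ 2 <= eps * ((q + 1) * m) * d).
  { rewrite <- Hdiff. apply Rabs_le_between in Hca. apply Rabs_le_between in Hcb. lra. }
  assert (Hd0 : 0 <= d) by apply Vnorm_ge0.
  destruct (Req_dec d 0) as [E|E]; [lra|].
  apply (Rmult_le_reg_l ((q + 1) * m * d)); nra.
Qed.

Lemma K0_closed (s : nat -> seqV) z : (forall k, K0 G m (s k)) -> inV z ->
  (forall eps, 0 < eps -> exists N, forall k, (N <= k)%nat -> Vnorm (vsub (s k) z) <= eps) ->
  K0 G m z.
Proof.
  intros Hs Hz Hconv. split; [exact Hz|]. split.
  - apply Req_le_aux. intros [eps Heps]. simpl.
    destruct (Hconv eps Heps) as [N HN]. specialize (HN N (le_n N)).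
    destruct (Hs N) as [HsN [HnN _]].
    pose proof (Vnorm_le_add_sub z (s N) (proj2 Hz) (proj2 HsN)) as Hz_le.
    pose proof (Vnorm_le_add_sub (s N) z (proj2 HsN) (proj2 Hz)) as HsN_le.
    rewrite Vnorm_sub_sym in Hz_le. apply Rabs_le. lra.
  - apply Req_le_aux. intros [eps Heps]. simpl.
    destruct (frechet_continuous G DG z G_frechet Hz eps Heps) as [delta [Hdelta Hclose]].
    destruct (Hconv (delta / 2)) as [N HN]; [lra|].
    destruct (Hs N) as [HsN [_ HGN]].
    specialize (Hclose (s N) HsN ltac:(specialize (HN N (le_n N)); lra)).
    rewrite HGN, Rabs_minus_sym in Hclose. exact Hclose.
Qed.

Lemma K0_seq_compact (w : nat -> seqV) : (forall k, K0 G m (w k)) ->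
  exists (phi : nat -> nat) z, (forall k, (phi k < phi (S k))%nat) /\ K0 G m z /\
    forall eps, 0 < eps -> exists N, forall k, (N <= k)%nat -> Vnorm (vsub (w (phi k)) z) <= eps.
Proof.
  intros Hw.
  destruct (DG_compact w 1 (fun k => proj1 (Hw k)) (fun k => Req_le _ _ (proj1 (proj2 (Hw k)))))
    as [phi [l [Hphi [_ Hconv]]]].
  pose proof (K0_cauchy_of_dual_cvg (fun k => w (phi k)) l (fun k => Hw (phi k)) Hconv) as Hcauchy.
  destruct (inV_complete (fun k => w (phi k)) (fun k => proj1 (Hw (phi k))) Hcauchy) as [z [Hz Hlim]].
  exists phi, z. split; [exact Hphi|]. split; [|exact Hlim].
  exact (K0_closed (fun k => w (phi k)) z (fun k => Hw (phi k)) Hz Hlim).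
Qed.

End Maximizers.
(** * Maximizers are not supported on multiples of n >= 2 *)

Definition compress (n : nat) (z : seqV) : seqV := fun k => z (n * k)%nat.

Lemma Lop_compress n z : mult_supported n z -> Lop n (compress n z) = z.
Proof.
  intros Hsupp. apply functional_extensionality; intros k. unfold Lop, compress.
  destruct (Nat.eqb (k mod n) 0) eqn:E.
  - apply Nat.eqb_eq in E. f_equal. rewrite (Nat.div_mod_eq k n) at 2. lia.
  - apply Nat.eqb_neq in E. destruct (Req_dec (z k) 0) as [Hz|Hz]; [auto | exfalso; auto].
Qed.

Lemma Lop_vzero n : Lop n vzero = vzero.
Proof.
  apply functional_extensionality; intros k. unfold Lop, vzero.
  destruct (Nat.eqb (k mod n) 0); reflexivity.
Qed.

Lemma Vnorm_compress n z : (1 <= n)%nat -> inV z ->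
  inV (compress n z) /\ INR n * Vnorm (compress n z) <= Vnorm z.
Proof.
  intros Hn [Hz0 Hz]. pose proof PI_RGT_0.
  assert (Hn1 : 1 <= INR n) by (apply (le_INR 1); exact Hn).
  destruct (Series_subseq_le (fun j => (INR j * z j) ^ 2) (fun k => (n * k)%nat)
              (fun _ => pow2_ge_0 _) ltac:(intros k; cbv beta; nia) Hz) as [Hsub Hle].
  assert (Hterm : forall k, (INR (n * k) * z (n * k)%nat) ^ 2
                            = INR n ^ 2 * (INR k * compress n z k) ^ 2)
    by (intros k; unfold compress; rewrite mult_INR; ring).
  assert (Hex : ex_energy (compress n z)).
  { apply (ex_series_ext (fun k => / INR n ^ 2 * (INR (n * k) * z (n * k)%nat) ^ 2)).
    - intros k. rewrite Hterm. simpl. field. lra.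
    - exact (ex_series_scal_l _ _ Hsub). }
  split; [split; [unfold compress; rewrite Nat.mul_0_r; exact Hz0 | exact Hex]|].
  apply Rsqr_incr_0_var; [|apply Vnorm_ge0]. rewrite !Rsqr_pow2.
  rewrite Rpow_mult_distr, !Vnorm_sq by assumption.
  rewrite (Series_ext _ _ Hterm), Series_scal_l in Hle. unfold energy.
  pose proof (pow2_ge_0 PI). nra.
Qed.

Definition off_energy (n : nat) (z : seqV) : R :=
  Series (fun j => if Nat.eqb (j mod n) 0 then 0 else (INR j * z j) ^ 2).

Lemma off_energy_terms_ge0 n z j :
  0 <= (if Nat.eqb (j mod n) 0 then 0 else (INR j * z j) ^ 2).
Proof. destruct (Nat.eqb (j mod n) 0); [lra | apply pow2_ge_0]. Qed.

Lemma ex_off_energy n z : ex_energy z ->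
  ex_series (fun j => if Nat.eqb (j mod n) 0 then 0 else (INR j * z j) ^ 2).
Proof.
  intros Hz. apply (@ex_series_le R_AbsRing R_CompleteNormedModule _ (fun j => (INR j * z j) ^ 2));
    [|exact Hz].
  intros j. change (norm ?x) with (Rabs x). rewrite Rabs_pos_eq by apply off_energy_terms_ge0.
  destruct (Nat.eqb (j mod n) 0); [apply pow2_ge_0 | lra].
Qed.

Lemma term_le_off_energy n z j : ex_energy z -> (j mod n <> 0)%nat ->
  (INR j * z j) ^ 2 <= off_energy n z.
Proof.
  intros Hz Hj.
  pose proof (term_le_Series _ (off_energy_terms_ge0 n z) j (ex_off_energy n z Hz)) as H.
  cbv beta in H. apply Nat.eqb_neq in Hj. rewrite Hj in H. exact H.
Qed.

Lemma off_energy_le_dist n y z : inV y -> ex_energy z -> mult_supported n y ->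
  PI ^ 2 * off_energy n z <= Vnorm (vsub y z) ^ 2.
Proof.
  intros Hy Hz Hsupp.
  assert (Hd : ex_energy (vsub y z)) by (rewrite vsub_vlin; apply ex_energy_lin; [apply Hy | exact Hz]).
  rewrite Vnorm_sq by exact Hd. apply Rmult_le_compat_l; [apply pow2_ge_0|].
  apply Series_le; [|exact Hd]. intros j. split; [apply off_energy_terms_ge0|].
  unfold vsub. destruct (Nat.eqb (j mod n) 0) eqn:E; [apply pow2_ge_0|].
  apply Nat.eqb_neq in E.
  assert (Hyj : y j = 0) by (destruct (Req_dec (y j) 0); [assumption | exfalso; auto]).
  rewrite Hyj. right. ring.
Qed.

Section LopInequality.

Variables (q : R) (G : seqV -> R) (DG : seqV -> seqV -> R) (m : R).
Hypothesis G_frechet : is_frechet_on inV G DG.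
Hypothesis DG_compact : compact_dual_map inV DG.
Hypothesis q_gt1 : 1 < q.
Hypothesis m_sup : is_m G q m.
Hypothesis m_pos : 0 < m.
Hypothesis G_Lop_lt : forall (n : nat) v, (2 <= n)%nat -> inV v -> 0 < G (Lop n v) ->
  G (Lop n v) < Rpower (INR n) (q + 1) * G v.

(* If [z = L_n w] with [z] in [K0], then [||w|| <= 1/n], so [m = G z < n^(q+1) G w <= m]. *)
Lemma K0_not_mult_supported z n : K0 G m z -> (2 <= n)%nat -> ~ mult_supported n z.
Proof.
  intros [Hz [Hnz HGz]] Hn Hsupp.
  set (w := compress n z).
  pose proof (Lop_compress n z Hsupp) as Hzw. fold w in Hzw.
  destruct (Vnorm_compress n z ltac:(lia) Hz) as [Hw Hnw]. fold w in Hw, Hnw. rewrite Hnz in Hnw.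
  assert (Hn2 : 2 <= INR n) by (apply (le_INR 2); exact Hn).
  assert (Hwpos : 0 < Vnorm w).
  { destruct (Vnorm_ge0 w) as [|E]; [assumption|]. exfalso.
    rewrite (Vnorm_eq0_vzero w Hw (eq_sym E)), Lop_vzero in Hzw.
    rewrite <- Hzw, Vnorm_vzero in Hnz. lra. }
  assert (HGw := G_le_sup q G m m_sup w Hw Hwpos).
  assert (HLt := G_Lop_lt n w Hn Hw ltac:(rewrite Hzw, HGz; exact m_pos)).
  rewrite Hzw, HGz in HLt.
  assert (Hpn : 0 < Rpower (INR n) (q + 1)) by apply exp_pos.
  assert (Hprod : Rpower (INR n) (q + 1) * Rpower (Vnorm w) (q + 1) <= 1).
  { rewrite Rpower_mult_distr by lra.
    eapply Rle_trans; [apply (Rle_Rpower_l _ 1); [lra | split; nra] | rewrite Rpower_base_1; lra]. }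
  apply (Rmult_le_compat_l (Rpower (INR n) (q + 1))) in HGw; [|lra]. nra.
Qed.

Lemma K0_off_energy_pos z n : K0 G m z -> (2 <= n)%nat -> 0 < off_energy n z.
Proof.
  intros Hz Hn.
  destruct (Series_ge0 _ (off_energy_terms_ge0 n z) (ex_off_energy n z (proj2 (proj1 Hz)))) as [|E];
    [assumption|].
  exfalso. apply (K0_not_mult_supported z n Hz Hn). intros j Hj.
  destruct (Nat.eq_dec (j mod n) 0) as [|Hmod]; [assumption|]. exfalso.
  pose proof (term_le_off_energy n z j (proj2 (proj1 Hz)) Hmod) as Hle.
  unfold off_energy in Hle. rewrite <- E in Hle.
  assert (Hj1 : (1 <= j)%nat) by (destruct j; [destruct Hz as [[H0 _] _]; congruence | lia]).
  assert (0 < INR j) by (apply lt_0_INR; lia).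
  pose proof (pow2_ge_0 (INR j * z j)). assert (Hprod : INR j * z j = 0) by nra.
  apply Rmult_integral in Hprod. destruct Hprod; lra.
Qed.

Lemma K0_far_from_mult_supported z : K0 G m z ->
  exists delta, 0 < delta /\ forall n y, (2 <= n)%nat -> inV y -> mult_supported n y ->
    delta <= Vnorm (vsub y z).
Proof.
  intros Hz. pose proof PI_RGT_0.
  destruct (classic (exists j0, z j0 <> 0)) as [[j0 Hj0]|Hzero].
  2: { exfalso. destruct Hz as [_ [Hnz _]].
       replace z with vzero in Hnz by (apply functional_extensionality; intros j;
         apply NNPP; intros E; apply Hzero; eauto).
       rewrite Vnorm_vzero in Hnz. lra. }
  assert (Hj01 : (1 <= j0)%nat) by (destruct j0; [destruct Hz as [[H0 _] _]; congruence | lia]).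
  set (t := (INR j0 * z j0) ^ 2).
  assert (Ht : 0 < t).
  { assert (0 < INR j0) by (apply lt_0_INR; lia).
    assert (INR j0 * z j0 <> 0) by (intros E; apply Rmult_integral in E; destruct E; lra).
    unfold t. rewrite <- Rsqr_pow2. apply Rsqr_pos_lt. assumption. }
  (* For [n > j0] the mode [j0] alone lies off the multiples of [n]. *)
  destruct (finite_pos_min (fun n => (2 <= n)%nat) (fun n => off_energy n z) j0
              (fun n _ Hn => K0_off_energy_pos z n Hz Hn)) as [d [Hd Hmin]].
  exists (PI * sqrt (Rmin d t)). split; [apply Rmult_lt_0_compat; [lra | apply sqrt_lt_R0, Rmin_pos; lra]|].
  intros n y Hn Hy Hsupp.
  assert (Hoff : Rmin d t <= off_energy n z).
  { destruct (Compare_dec.le_dec n j0) as [Hle|Hgt].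
    - eapply Rle_trans; [apply Rmin_l | apply Hmin; assumption].
    - eapply Rle_trans; [apply Rmin_r|]. apply term_le_off_energy; [apply Hz|].
      rewrite Nat.mod_small; lia. }
  pose proof (off_energy_le_dist n y z Hy (proj2 (proj1 Hz)) Hsupp).
  apply Rsqr_incr_0_var; [|apply Vnorm_ge0]. rewrite !Rsqr_pow2, Rpow_mult_distr, pow2_sqrt
    by (apply Rlt_le, Rmin_pos; lra).
  pose proof (pow2_ge_0 PI). nra.
Qed.

Lemma K0_nbhd_not_mult_supported : exists eps, 0 < eps /\
  forall y w n, inV y -> K0 G m w -> Vnorm (vsub y w) < eps -> (2 <= n)%nat -> ~ mult_supported n y.
Proof.
  apply NNPP. intros Hnot.
  assert (Hseq : forall k : nat, exists w, K0 G m w /\ exists y n, inV y /\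
      Vnorm (vsub y w) < / (INR k + 1) /\ (2 <= n)%nat /\ mult_supported n y).
  { intros k. apply NNPP. intros Hk. apply Hnot.
    exists (/ (INR k + 1)). split; [apply Rinv_0_lt_compat; pose proof (pos_INR k); lra|].
    intros y w n Hy Hw Hd Hn Hsupp. apply Hk. exists w. split; [exact Hw|]. exists y, n. auto. }
  destruct (choice _ Hseq) as [w Hw].
  destruct (K0_seq_compact q G DG m G_frechet m_sup q_gt1 m_pos DG_compact w (fun k => proj1 (Hw k)))
    as [phi [z [Hphi [Hz Hconv]]]].
  destruct (K0_far_from_mult_supported z Hz) as [delta [Hdelta Hfar]].
  destruct (Hconv (delta / 2)) as [N1 HN1]; [lra|].
  destruct (INR_archimed (delta / 2) 1) as [N2 HN2]; [lra|].
  set (k := max N1 N2).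
  destruct (proj2 (Hw (phi k))) as [y [n [Hy [Hyw [Hn Hsupp]]]]].
  specialize (Hfar n y Hn Hy Hsupp). specialize (HN1 k ltac:(lia)).
  assert (Hk : (N2 <= phi k)%nat).
  { assert (Hmono : forall i, (i <= phi i)%nat) by (induction i; [lia | specialize (Hphi i); lia]).
    specialize (Hmono k). lia. }
  apply le_INR in Hk.
  assert (Hsmall : / (INR (phi k) + 1) < delta / 2).
  { apply (Rmult_lt_reg_l (INR (phi k) + 1)); [pose proof (pos_INR (phi k)); lra|].
    rewrite Rinv_r by (pose proof (pos_INR (phi k)); lra). nra. }
  pose proof (Vnorm_sub_triangle y (w (phi k)) z (proj2 Hy) (proj2 (proj1 (proj1 (Hw (phi k)))))
                (proj2 (proj1 Hz))).
  lra.
Qed.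

End LopInequality.

Lemma vfun_2PI_periodic v : t_periodic v (2 * PI).
Proof.
  intros t x _. unfold vfun. apply Series_ext. intros j.
  replace (INR j * (t + 2 * PI)) with (INR j * t + 2 * INR j * PI) by ring.
  rewrite cos_period. reflexivity.
Qed.

Lemma mult_supported_vscal n c y : c <> 0 -> mult_supported n (vscal c y) -> mult_supported n y.
Proof.
  intros Hc Hsupp j Hj. apply Hsupp. unfold vscal. intros E.
  apply Rmult_integral in E. destruct E; contradiction.
Qed.

Theorem lemma4p3 :
  forall (q : R) (G : seqV -> R) (DG : seqV -> seqV -> R) (m : R),
  1 < q ->
  C1_on inV G DG -> compact_dual_map inV DG ->
  (forall v lam, inV v -> 0 < lam -> G (vscal lam v) = Rpower lam (q + 1) * G v) ->
  is_m G q m -> 0 < m ->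
  (forall (n : nat) v, (2 <= n)%nat -> inV v -> 0 < G (Lop n v) ->
      G (Lop n v) < Rpower (INR n) (q + 1) * G v) ->
  forall C0 : R, 0 < C0 ->
  forall h : R -> R,
  (forall eps, 0 < eps -> exists delta, 0 < delta /\
      forall s, 0 <= s < delta -> Rabs (h s) < eps) ->
  exists C9 : R, 0 < C9 /\ C9 <= C0 /\
  forall (mu r0 alpha : R) (Rf : seqV -> R) (DR : seqV -> seqV -> R) (v : seqV),
    0 < mu -> 0 < r0 -> 0 < alpha ->
    C1_on (Vball r0) Rf DR -> compact_dual_map (Vball r0) DR ->
    Rf vzero = 0 ->
    (forall w, Vball r0 w -> Rabs (DR w w) <= alpha * powr (Vnorm w) (q + 1)) ->
    alpha / m <= C9 ->
    Rpower (mu / m) (1 / (q - 1)) <= C0 * r0 ->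
    (* v is the critical point of Phi = mu/2 ||.||^2 - G + Rf given by the abstract result *)
    Vball r0 v ->
    (forall u, inV u -> mu * Vinner v u - DG v u + DR v u = 0) ->
    (exists y, inV y /\
       v = vscal (Rpower (mu / (m * (q + 1))) (1 / (q - 1))) y /\
       dist_le y (K0 G m) (h (alpha / m))) ->
    minimal_period_2pi v.
Proof.
  (* Only the localization of [v] near [K0] matters; the other hypotheses describe how [v] was found. *)
  intros q G DG m Hq [HF _] HK _ Hm Hm0 HL C0 HC0 h Hh.
  destruct (K0_nbhd_not_mult_supported q G DG m HF HK Hq Hm Hm0 HL) as [eps [Heps Hnear]].
  destruct (Hh (eps / 2) ltac:(lra)) as [dh [Hdh Hsmall]].
  exists (Rmin C0 (dh / 2)). split; [apply Rmin_pos; lra|]. split; [apply Rmin_l|].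
  intros mu r0 alpha Rf DR v _ _ Hal _ _ _ _ HC9 _ [Hv _] _ [y [Hy [Hvy Hdist]]].
  assert (Hh_small : h (alpha / m) < eps / 2).
  { assert (0 <= alpha / m) by (apply Rlt_le, Rdiv_lt_0_compat; assumption).
    pose proof (Rmin_r C0 (dh / 2)).
    apply (Rle_lt_trans _ (Rabs (h (alpha / m)))); [apply Rle_abs | apply Hsmall; lra]. }
  destruct (Hdist (eps / 2) ltac:(lra)) as [w [Hw Hyw]].
  split; [apply vfun_2PI_periodic|].
  intros T HT Hper. destruct (Rle_dec (2 * PI) T) as [|HT2]; [assumption|]. exfalso.
  destruct (period_support v T Hv ltac:(lra) Hper) as [n [Hn Hsupp]].
  apply (Hnear y w n Hy Hw ltac:(lra) Hn).
  rewrite Hvy in Hsupp. refine (mult_supported_vscal n _ y _ Hsupp).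
  apply Rgt_not_eq, exp_pos.
Qed.
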